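(* Let $G$ be a complex, simply-connected, simple Lie group with Borel subgroup $B$, maximal torus $\mathbb{T}\subset B$, simple roots $\Delta$ and Weyl group $W$ with Bruhat order $\le$ and longest element $w_0$. For any parabolic subgroup $P\supseteq B$ (with corresponding $\Delta_P\subsetneq\Delta$ and $w_P$ the longest element of $W_P$) we have $\Gamma(w_0w_P)=\Delta$.
   Context: $W_P$ is the subgroup of $W$ generated by $s_\alpha$, $\alpha\in\Delta_P$. For $v\in W$, $\Gamma(v):=\{\alpha\in\Delta\mid s_\alpha\le v\}$, where $s_\alpha$ is the simple reflection associated with $\alpha$. *)

(* Weyl group of a simple Lie algebra, realized from its
   Cartan matrix as the group generated by the simple reflections acting on
   the root lattice (coordinates w.r.t. the simple roots). *)
From HB Require Import structures.
From mathcomp Require Import all_boot all_order all_algebra.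
Set Implicit Arguments.
Unset Strict Implicit.
Unset Printing Implicit Defensive.
Import Order.TTheory GRing.Theory Num.Theory.
Local Open Scope ring_scope.

Section Weyl.
Variable n : nat.
Implicit Types (A : 'M[int]_n).

Definition finite_type_cartan A : Prop :=
  [/\ forall i, A i i = 2,
      forall i j, i != j -> A i j <= 0,
      forall i j, A i j = 0 <-> A j i = 0
    & exists d : 'I_n -> rat,
        [/\ forall i, 0 < d i,
            forall i j, d i * (A i j)%:~R = d j * (A j i)%:~R
          & forall x : 'I_n -> rat, (exists i, x i != 0) ->
              0 < \sum_i \sum_j x i * d i * (A i j)%:~R * x j]].

(* indecomposable Cartan matrix (connected Dynkin diagram) <-> simple *)
Definition indecomposable A : Prop :=
  forall S : {set 'I_n}, S != set0 -> S != setT ->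
    exists i j, [/\ i \in S, j \notin S & A i j != 0].

(* simple reflection s_i : alpha_j |-> alpha_j - a_ij alpha_i *)
Definition refl A (i : 'I_n) : 'M[int]_n :=
  \matrix_(k, j) ((k == j)%:R - (k == i)%:R * A i j).

Definition word A (s : seq 'I_n) : 'M[int]_n :=
  foldr (fun i M => refl A i *m M) 1%:M s.

Definition in_W A (w : 'M[int]_n) : Prop := exists s, word A s = w.

Definition reduced A (s : seq 'I_n) : Prop :=
  forall s', word A s' = word A s -> (size s <= size s')%N.

Definition length_of A (w : 'M[int]_n) (k : nat) : Prop :=
  exists s, [/\ word A s = w, size s = k & reduced A s].

(* reflections: conjugates w s_i w^-1 of simple reflections *)
Definition reflection A (t : 'M[int]_n) : Prop :=
  exists s i, t = word A (s ++ i :: rev s).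

Definition bruhat_step A (u v : 'M[int]_n) : Prop :=
  exists t, [/\ reflection A t, v = u *m t &
    exists k l, [/\ length_of A u k, length_of A v l & (k < l)%N]].

Inductive bruhat_le A : 'M[int]_n -> 'M[int]_n -> Prop :=
| bruhat_refl u : bruhat_le A u u
| bruhat_trans u v w : bruhat_le A u v -> bruhat_step A v w -> bruhat_le A u w.

(* longest element of the parabolic subgroup W_J (J = setT gives w_0) *)
Definition longest_in A (J : {set 'I_n}) (w : 'M[int]_n) : Prop :=
  exists s, [/\ word A s = w, all (mem J) s, reduced A s &
    forall s', all (mem J) s' -> reduced A s' -> (size s' <= size s)%N].

(* Gamma(v) = { alpha in Delta | s_alpha <= v } *)
(* as a predicate on Delta = 'I_n (Bruhat order is Prop-valued) *)
Definition Gamma A (v : 'M[int]_n) (i : 'I_n) : Prop :=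
  bruhat_le A (refl A i) v.

End Weyl.

From mathcomp Require Import all_boot all_order all_algebra.
From mathcomp Require Import fingroup perm zify ring lra.
Set Implicit Arguments.
Unset Strict Implicit.
Unset Printing Implicit Defensive.
Import Order.TTheory GRing.Theory Num.Theory.
Local Open Scope ring_scope.

(* Column j of [word A s] holds the coordinates of w(alpha_j) in the simple roots.
   The key input is the classical fact that w(alpha_j) is a nonnegative combination of
   simple roots whenever l(w s_j) > l(w) (Deodhar's argument: split off from w the
   longest right factor lying in the rank-2 parabolic subgroup generated by s_j and the
   last letter of a reduced word of w, and check the six rank-2 Cartan matrices by hand).
   In particular w0 sends every simple root to a nonpositive vector.
   Let r be a reduced word of w0 wP. If s_i occurs in r, then s_i <= w0 wP by the subword
   property. Otherwise left multiplication by r fixes row i, so row i of w0 = (w0 wP) wP^-1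
   is row i of wP^-1, i.e. e_i - c^T A for some integer vector c supported on J. As this row
   is nonpositive, c^T A >= e_i; positive definiteness forces c >= 0, and indecomposability
   of A then forces c = 0 because c vanishes outside J != Delta, a contradiction. *)

Lemma big_delta_r (R : pzSemiRingType) n (F : 'I_n -> R) j :
  \sum_l F l * (l == j)%:R = F j.
Proof.
rewrite (bigD1 j) //= eqxx mulr1 big1 ?addr0 // => l /negbTE ->.
by rewrite mulr0.
Qed.

Lemma big_delta_l (R : pzSemiRingType) n (F : 'I_n -> R) j :
  \sum_l (j == l)%:R * F l = F j.
Proof.
rewrite (bigD1 j) //= eqxx mul1r big1 ?addr0 // => l; rewrite eq_sym => /negbTE ->.
by rewrite mul0r.
Qed.

Lemma big_support2 (V : nmodType) n (F : 'I_n -> V) s t : s != t ->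
  (forall l, l != s -> l != t -> F l = 0) -> \sum_l F l = F s + F t.
Proof.
move=> st F0; rewrite (bigD1 s) //= (bigD1 t) 1?eq_sym //= big1 ?addr0 //.
by move=> l /andP [ls lt]; apply: F0.
Qed.

Section WeylGroup.
Variables (n : nat) (A : 'M[int]_n).
Hypothesis Adiag : forall i, A i i = 2.

Lemma refl_mulmxE m i (M : 'M[int]_(n, m)) k j :
  (refl A i *m M) k j = M k j - (k == i)%:R * \sum_l A i l * M l j.
Proof.
rewrite !mxE; under eq_bigr do rewrite mxE mulrBl.
rewrite sumrB big_delta_l mulr_sumr; congr (_ - _).
by apply: eq_bigr => l _; rewrite mulrA.
Qed.

Lemma mulmx_reflE m i (M : 'M[int]_(m, n)) k j :
  (M *m refl A i) k j = M k j - M k i * A i j.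
Proof.
rewrite !mxE; under eq_bigr do rewrite mxE mulrBr.
rewrite sumrB big_delta_r; under eq_bigr do rewrite mulrA.
by rewrite -mulr_suml big_delta_r.
Qed.

Lemma reflK i : refl A i *m refl A i = 1%:M.
Proof.
apply/matrixP=> k j; rewrite mulmx_reflE !mxE Adiag.
by case: (k =P i) => [->|_]; rewrite ?mul1r ?mul0r ?subr0 //; case: (i =P j) => _; lia.
Qed.

Lemma word_cat s t : word A (s ++ t) = word A s *m word A t.
Proof. by elim: s => [|x s IH] /=; rewrite ?mul1mx // IH mulmxA. Qed.

Lemma word_seq1 x : word A [:: x] = refl A x.
Proof. exact: mulmx1. Qed.

Lemma word_rcons s x : word A (rcons s x) = word A s *m refl A x.
Proof. by rewrite -cats1 word_cat word_seq1. Qed.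

Lemma word_rcons_rcons s x : word A (rcons (rcons s x) x) = word A s.
Proof. by rewrite !word_rcons -mulmxA reflK mulmx1. Qed.

Lemma word_cat_cons_cons q z x : word A (q ++ z :: z :: x) = word A (q ++ x).
Proof. by rewrite !word_cat; congr (_ *m _); rewrite /= mulmxA reflK mul1mx. Qed.

Lemma mulmx_word_rev s : word A s *m word A (rev s) = 1%:M.
Proof.
elim: s => [|x s IH] /=; first exact: mulmx1.
by rewrite rev_cons word_rcons !mulmxA -(mulmxA _ _ (word A _)) IH mulmx1 reflK.
Qed.

Lemma det_refl i : \det (refl A i) = -1.
Proof.
rewrite /determinant (bigD1 (1%g : {perm 'I_n})) //= odd_perm1 expr0 mul1r.
rewrite (bigD1 i) //= perm1 !mxE eqxx Adiag mul1r big1 => [|k ki]; last first.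
  by rewrite perm1 !mxE eqxx (negbTE ki) mul0r subr0.
rewrite mulr1 big1 ?addr0; first by lia.
move=> s s1; have [k [ki sk]] : exists k, k != i /\ s k != k.
  have [k sk] : exists k, s k != k.
    apply/existsP; apply: contraR s1 => /existsPn fix_s.
    by apply/eqP/permP => k; rewrite perm1; apply/eqP/negPn.
  have [ki|] := eqVneq k i; last by exists k.
  exists (s k); split; first by rewrite -ki.
  by apply: contra sk => /eqP/perm_inj/eqP.
apply/eqP; rewrite mulf_eq0 prodf_seq_eq0; apply/orP; right.
apply/hasP; exists k; rewrite ?mem_index_enum //= !mxE (negbTE ki) mul0r subr0.
by move: sk; rewrite eq_sym => /negbTE ->.
Qed.

Lemma odd_size_word s s' : word A s = word A s' -> odd (size s) = odd (size s').
Proof.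
have det_word r : \det (word A r) = (-1) ^+ size r.
  by elim: r => [|x r IH] /=; rewrite ?det1 // det_mulmx IH det_refl exprS.
move=> E; apply: (@signr_inj int).
by rewrite !signr_odd -!det_word E.
Qed.

Definition has_word_of_size (w : 'M[int]_n) k :=
  [exists s : k.-tuple 'I_n, word A s == w].

Lemma has_word_of_sizeP w k :
  reflect (exists2 s, word A s = w & size s = k) (has_word_of_size w k).
Proof.
apply: (iffP existsP) => [[s /eqP <-]|[s <- <-]]; first by exists s; rewrite ?size_tuple.
by exists (in_tuple s).
Qed.

Lemma has_word_of_size_size s : has_word_of_size (word A s) (size s).
Proof. by apply/has_word_of_sizeP; exists s. Qed.

Definition ell s : nat := ex_minn (ex_intro (has_word_of_size (word A s)) _ (has_word_of_size_size s)).

Lemma ell_min s r : word A r = word A s -> (ell s <= size r)%N.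
Proof. by rewrite /ell; case: ex_minnP => m _ min Er; apply/min/has_word_of_sizeP; exists r. Qed.

Lemma ell_le_size s : (ell s <= size s)%N.
Proof. exact: ell_min. Qed.

Lemma eq_ell s r : word A r = word A s -> ell r = ell s.
Proof. by move=> E; apply: eq_ex_minn => k; rewrite E. Qed.

Lemma ell_attained s : exists2 r, word A r = word A s & size r = ell s.
Proof. by rewrite /ell; case: ex_minnP => m /has_word_of_sizeP. Qed.

Lemma reducedP s : reduced A s <-> ell s = size s.
Proof.
split=> [red_s|Es r Er]; last by rewrite -Es ell_min.
have [r Er Sr] := ell_attained s.
by apply/eqP; rewrite eqn_leq ell_le_size -Sr red_s.
Qed.

Lemma ell_witness s : exists r, [/\ word A r = word A s, size r = ell s & reduced A r].
Proof.
have [r Er Sr] := ell_attained s; exists r; split=> //.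
by apply/reducedP; rewrite (eq_ell Er).
Qed.

Lemma reduced_infix a b c : reduced A (a ++ b ++ c) -> reduced A b.
Proof.
move=> red b' E; have := red (a ++ b' ++ c); rewrite !word_cat E => /(_ erefl).
by rewrite !size_cat leq_add2l leq_add2r.
Qed.

Lemma ell_cat p q : (ell (p ++ q) <= ell p + ell q)%N.
Proof.
have [[r Er <-] [r' Er' <-]] := (ell_attained p, ell_attained q).
by rewrite -size_cat ell_min // !word_cat Er Er'.
Qed.

Lemma ell_rcons_neq p j : ell (rcons p j) != ell p.
Proof.
have [[r Er Sr] [r' Er' Sr']] := (ell_attained p, ell_attained (rcons p j)).
have /odd_size_word : word A (rcons r j) = word A r' by rewrite Er' !word_rcons Er.
by rewrite size_rcons Sr Sr' /=; apply: contraPneq => ->; case: odd.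
Qed.

Lemma ell_rcons_le p j : (ell (rcons p j) <= (ell p).+1)%N.
Proof.
rewrite -addn1 -cats1; apply: leq_trans (ell_cat _ _) _.
by rewrite leq_add2l (ell_le_size [:: j]).
Qed.

Lemma ell_le_rcons p j : (ell p <= (ell (rcons p j)).+1)%N.
Proof. by rewrite -(eq_ell (word_rcons_rcons p j)) ell_rcons_le. Qed.

Lemma ascent_rcons_size x y j :
  (ell x < ell (rcons x j))%N -> word A (rcons y j) = word A x -> (ell x < size y)%N.
Proof.
move=> asc Ey; apply: leq_trans asc _.
have Ey' : word A y = word A (rcons x j).
  by rewrite -(word_rcons_rcons y j) word_rcons Ey -word_rcons.
by rewrite -(eq_ell Ey') ell_le_size.
Qed.

Lemma length_additive_suffix p q x :
  word A (q ++ x) = word A p -> (ell q + size x = ell p)%N ->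
  reduced A x /\ forall j, (ell p < ell (rcons p j))%N -> (ell x < ell (rcons x j))%N.
Proof.
move=> Ew El; have red_x : reduced A x.
  apply/reducedP/eqP; rewrite eqn_leq ell_le_size -(leq_add2l (ell q)) El.
  by rewrite -(eq_ell Ew) ell_cat.
split=> // j asc; have := ell_cat q (rcons x j).
rewrite -rcons_cat (eq_ell (s := rcons p j)); last by rewrite !word_rcons Ew.
by rewrite (reducedP x).1 // -(ltn_add2l (ell q)) El; apply: leq_trans.
Qed.

Lemma parabolic_factorization (I : {set 'I_n}) p q x :
  all (mem I) x -> word A (q ++ x) = word A p -> (ell q + size x = ell p)%N ->
  exists q' x', [/\ all (mem I) x', word A (q' ++ x') = word A p,
    (ell q' + size x' = ell p)%N, (size x <= size x')%N &
    forall z, z \in I -> (ell q' < ell (rcons q' z))%N].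
Proof.
elim: {q}(ell q).+1 {-2}q (ltnSn (ell q)) x => // k IH q lt_qk x xI Ew El.
have [/exists_inP [z zI desc]|/exists_inPn asc] :=
  boolP [exists z in I, ell (rcons q z) < ell q]%N; last first.
  exists q, x; split=> // z zI.
  by rewrite ltn_neqAle eq_sym ell_rcons_neq leqNgt asc.
have zxI : all (mem I) (z :: x) by rewrite /= zI.
have Ew_z : word A (rcons q z ++ z :: x) = word A p by rewrite cat_rcons word_cat_cons_cons.
have El_z : (ell (rcons q z) + size (z :: x) = ell p)%N.
  have ell_q : ell q = (ell (rcons q z)).+1.
    by apply/eqP; rewrite eqn_leq ell_le_rcons desc.
  by rewrite -El ell_q addnS.
have [q' [x' [x'I Ew' El' le_x' asc]]] :=
  IH (rcons q z) (leq_trans desc lt_qk) (z :: x) zxI Ew_z El_z.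
by exists q', x'; split=> //; apply: leq_trans le_x'.
Qed.

Section Rank2.
Variables s t : 'I_n.
Hypothesis st : s != t.

Definition alt_letter (c : bool) := if c then s else t.

Fixpoint alt_word (c : bool) (k : nat) : seq 'I_n :=
  if k is k'.+1 then alt_letter c :: alt_word (~~ c) k' else [::].

(* The coefficients of [alpha_s] and [alpha_t] in [w alpha_j - alpha_j], for
   [w = word A (alt_word c k)], [a = A s t], [b = A t s], [ps = A s j] and [pt = A t j]. *)
Fixpoint alt_coords (a b ps pt : int) (c : bool) (k : nat) : int * int :=
  if k is k'.+1 then
    let p := alt_coords a b ps pt (~~ c) k' in
    if c then (- p.1 - a * p.2 - ps, p.2) else (p.1, - p.2 - b * p.1 - pt)
  else (0, 0).

Lemma alt_wordE c k r j :
  let p := alt_coords (A s t) (A t s) (A s j) (A t j) c k in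
  word A (alt_word c k) r j = (r == j)%:R + (r == s)%:R * p.1 + (r == t)%:R * p.2.
Proof.
elim: k c r => [|k IH] c r /=; first by rewrite mxE !mulr0 !addr0.
rewrite refl_mulmxE IH.
under eq_bigr do rewrite IH !mulrDr !mulrA.
rewrite !big_split -!mulr_suml /= !big_delta_r.
case: c => /=; rewrite Adiag.
  by case: (r =P s) => [->|_]; rewrite ?(negbTE st) /=; lia.
by case: (r =P t) => [->|_]; rewrite ?(eq_sym t s) ?(negbTE st) /=; lia.
Qed.

Lemma alt_word_braid m :
  (forall ps pt, alt_coords (A s t) (A t s) ps pt true m =
                 alt_coords (A s t) (A t s) ps pt false m) ->
  word A (alt_word true m) = word A (alt_word false m).
Proof. by move=> E; apply/matrixP=> r j; rewrite !alt_wordE E. Qed.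

Lemma size_alt_word c k : size (alt_word c k) = k.
Proof. by elim: k c => //= k IH c; rewrite IH. Qed.

Lemma alt_word_cat c k l :
  alt_word c (k + l) = alt_word c k ++ alt_word (odd k (+) c) l.
Proof. by elim: k c => //= k IH c; rewrite IH addbN addNb. Qed.

Lemma last_alt_word d c k : last d (alt_word c k.+1) = alt_letter (odd k (+) c).
Proof.
elim: k c d => [|k IH] c d //.
by rewrite -[LHS]/(last (alt_letter c) (alt_word (~~ c) k.+1)) IH addbN addNb.
Qed.

Lemma alt_letterK c : (alt_letter c == s) = c.
Proof. by case: c; rewrite /= ?eqxx // eq_sym (negbTE st). Qed.

Lemma reduced_alt_word x : all (mem [set s; t]) x -> reduced A x ->
  x = alt_word (head t x == s) (size x).
Proof.
elim: x => [|u x IH] //= /andP [uI xI] red.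
have -> : alt_letter (u == s) = u by move: uI; rewrite !inE /=; case: eqP => // _ /eqP.
congr (_ :: _); case: x IH xI red => [|u' x] // IH xI red.
have /andP [u'I _] := xI.
have u'u : u' != u.
  apply/eqP => u'u; have := red x; rewrite u'u -[_ :: _]/([::] ++ _) word_cat_cons_cons.
  by move=> /(_ erefl) /=; lia.
rewrite {1}IH //; last by apply: (reduced_infix (a := [:: u]) (c := [::])); rewrite cats0.
congr alt_word; move: uI u'I u'u; rewrite !inE.
by case: (u =P s) => [->|_]; case: (u' =P s) => [->|_] //= /eqP -> /eqP ->; rewrite eqxx.
Qed.

Lemma rank2_col_ge0_of_braid m x :
  (0 < m)%N ->
  (forall ps pt, alt_coords (A s t) (A t s) ps pt true m =
                 alt_coords (A s t) (A t s) ps pt false m) ->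
  (forall c k, (k < m)%N -> last t (alt_word c k) != s ->
     let p := alt_coords (A s t) (A t s) (A s s) (A t s) c k in 0 <= 1 + p.1 /\ 0 <= p.2) ->
  all (mem [set s; t]) x -> reduced A x -> (ell x < ell (rcons x s))%N ->
  forall r, 0 <= word A x r s /\ (r \notin [set s; t] -> word A x r s = 0).
Proof.
move=> m_gt0 /alt_word_braid braid pos xI red asc.
have last_x y : word A y = word A x -> size y = size x -> last t y != s.
  case/lastP: y => [|y u] Ey Sy; first by rewrite eq_sym.
  rewrite last_rcons; apply/eqP => us; rewrite us in Ey Sy.
  by have := ascent_rcons_size asc Ey; rewrite (reducedP x).1 // -Sy size_rcons ltnNge leqnSn.
have Ex := reduced_alt_word xI red.
set c := (head t x == s) in Ex; set k := size x in Ex.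
(* By the braid relation, an alternating word of length >= m has another expression of
   the same length ending with the other letter. *)
have [mk|km] := leqP m k.
  pose c' := odd (k - m) (+) c.
  have Ex' : x = alt_word c (k - m) ++ alt_word c' m by rewrite Ex -alt_word_cat subnK.
  pose y := alt_word c (k - m) ++ alt_word (~~ c') m.
  have Ey : word A y = word A x.
    by rewrite Ex' !word_cat; congr (_ *m _); case: (c') => /=.
  have Sy : size y = size x by rewrite Ex' !size_cat !size_alt_word.
  suff : false by [].
  move: (last_x x erefl erefl) (last_x y Ey Sy); rewrite {1}Ex' /y !last_cat.
  case: (m) m_gt0 => // m' _.
  by rewrite !last_alt_word !alt_letterK addbN; case: addb.
have lx : last t (alt_word c k) != s by rewrite -Ex; apply: last_x.
have [p1 p2] := pos c k km lx.
move=> r; rewrite Ex alt_wordE !inE negb_or.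
case: (r =P s) => [->|_]; first by rewrite (negbTE st) /=; lia.
by case: (r == t) => /=; lia.
Qed.

End Rank2.

Hypothesis HA : finite_type_cartan A.

Lemma cartan_prod_lt4 s t : s != t -> A s t * A t s < 4.
Proof.
case: HA => _ _ _ [d [d_gt0 _ dA_pos]] st.
(* The quadratic form at x = - a e_s + 2 e_t equals d_t (8 - 2 a b). *)
pose x l : rat := if l == s then - (A s t)%:~R else if l == t then 2 else 0.
have [xs xt] : x s = - (A s t)%:~R /\ x t = 2 by rewrite /x eqxx eq_sym (negbTE st) eqxx.
have x0 l : l != s -> l != t -> x l = 0 by rewrite /x => /negbTE -> /negbTE ->.
have := dA_pos x (ex_intro _ t _); rewrite xt => /(_ isT).
have row2 i : \sum_j x i * d i * (A i j)%:~R * x j =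
    x i * d i * (A i s)%:~R * x s + x i * d i * (A i t)%:~R * x t.
  by apply: big_support2 => // j js jt; rewrite (x0 j) // mulr0.
rewrite (big_support2 st) => [|l ls lt]; last by rewrite big1 // => j _; rewrite x0 // !mul0r.
rewrite !row2 xs xt !Adiag -(ltr_int rat) intrM.
set a := (A s t)%:~R; set b := (A t s)%:~R.
by have := d_gt0 t; nra.
Qed.

Lemma rank2_col_ge0 s t x : s != t ->
  all (mem [set s; t]) x -> reduced A x -> (ell x < ell (rcons x s))%N ->
  forall r, 0 <= word A x r s /\ (r \notin [set s; t] -> word A x r s = 0).
Proof.
move=> st; have lt4 := cartan_prod_lt4 st.
case: HA => _ A_le0 A_eq0 _.
have ab_le0 : A s t <= 0 by apply: A_le0.
have ba_le0 : A t s <= 0 by apply: A_le0; rewrite eq_sym.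
(* The rank-2 Cartan matrices of finite type A1xA1, A2, B2, C2, G2, G2, whose braid
   relations have lengths 2, 3, 4, 4, 6, 6. *)
have : (A s t = 0 /\ A t s = 0) \/ (A s t = -1 /\ A t s = -1) \/
       (A s t = -1 /\ A t s = -2) \/ (A s t = -2 /\ A t s = -1) \/
       (A s t = -1 /\ A t s = -3) \/ (A s t = -3 /\ A t s = -1).
  have [ab_0|ab_n0] := eqVneq (A s t) 0; first by left; split=> //; apply/A_eq0.
  have ba_n0 : A t s != 0 by apply: contra_neq ab_n0 => /A_eq0.
  by right; nia.
case=> [[Ea Eb]|[[Ea Eb]|[[Ea Eb]|[[Ea Eb]|[[Ea Eb]|[Ea Eb]]]]]];
  [apply: (rank2_col_ge0_of_braid st (m := 2)) | apply: (rank2_col_ge0_of_braid st (m := 3))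
  |apply: (rank2_col_ge0_of_braid st (m := 4)) | apply: (rank2_col_ge0_of_braid st (m := 4))
  |apply: (rank2_col_ge0_of_braid st (m := 6)) | apply: (rank2_col_ge0_of_braid st (m := 6))];
  try done.
all: try by move=> ps pt; rewrite Ea Eb /=; congr pair; ring.
all: move=> c k km; rewrite Adiag Ea Eb.
all: by case: c; do 6? [case: k km => [|k] km] => //=; rewrite ?eqxx //= => _; split; lia.
Qed.

Lemma ascent_col_ge0 p j : (ell p < ell (rcons p j))%N -> forall k, 0 <= word A p k j.
Proof.
elim: {p}(ell p).+1 {-2}p (ltnSn (ell p)) j => // l IH p lt_pl j asc k.
have [r [Er Sr red_r]] := ell_witness p.
case/lastP: r Er Sr red_r => [|r t] Er Sr red_r; first by rewrite -Er mxE; case: (k == j).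
have red_r' : reduced A r.
  by apply: (reduced_infix (a := [::]) (c := [:: t])); rewrite cats1.
have El : (ell r + size [:: t] = ell p)%N.
  by rewrite (reducedP r).1 // addn1 -Sr size_rcons.
have tj : t != j.
  apply: contraTneq asc => tj; rewrite -leqNgt (eq_ell (r := rcons p j) (s := r)).
    by rewrite -El leq_addr.
  by rewrite word_rcons -Er -tj -word_rcons word_rcons_rcons.
have tI : all (mem [set j; t]) [:: t] by rewrite /= !inE eqxx orbT.
have Er' : word A (r ++ [:: t]) = word A p by rewrite cats1.
have [q [x [xI Ew El' size_x asc_q]]] := parabolic_factorization tI Er' El.
have lt_ql : (ell q < l)%N.
  rewrite ltnS in lt_pl; apply: leq_trans lt_pl.
  rewrite -El' -{1}(addn0 (ell q)) ltn_add2l.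
  by rewrite /= in size_x.
have q_ge0 z : z \in [set j; t] -> forall k, 0 <= word A q k z.
  by move=> zI; apply: IH lt_ql z (asc_q z zI).
have [red_x asc_x] := length_additive_suffix Ew El'.
have jt : j != t by rewrite eq_sym.
have x_col := rank2_col_ge0 jt xI red_x (asc_x j asc).
rewrite -Ew word_cat mxE; apply: sumr_ge0 => u _.
have [uI|uI] := boolP (u \in [set j; t]).
  by rewrite mulr_ge0 ?q_ge0 ?(x_col u).1.
by rewrite (x_col u).2 // mulr0.
Qed.

Lemma descent_col_le0 p j : (ell (rcons p j) < ell p)%N -> forall k, word A p k j <= 0.
Proof.
rewrite -(eq_ell (word_rcons_rcons p j)) => /ascent_col_ge0 col_ge0 k.
by have := col_ge0 k; rewrite word_rcons mulmx_reflE Adiag; lia.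
Qed.

Lemma longest_col_le0 s0 : reduced A s0 ->
  (forall s, reduced A s -> (size s <= size s0)%N) -> forall k j, word A s0 k j <= 0.
Proof.
move=> /reducedP red_s0 max_s0 k j; apply: descent_col_le0.
rewrite ltn_neqAle ell_rcons_neq /= red_s0.
by have [r [_ <- red_r]] := ell_witness (rcons s0 j); apply: max_s0.
Qed.

Lemma cartan_preimage_ge0 (c : 'I_n -> int) :
  (forall j, 0 <= \sum_i c i * A i j) -> forall i, 0 <= c i.
Proof.
case: HA => _ A_le0 _ [d [d_gt0 _ dA_pos]] y_ge0.
pose cm i := if c i < 0 then - c i else 0.
have cm_ge0 i : 0 <= cm i by rewrite /cm; case: ltrP => // /ltW; rewrite oppr_ge0.
have cm_A j : cm j != 0 -> \sum_i cm i * A i j <= 0.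
  rewrite {1}/cm; case: ltrP => // cj_lt0 _.
  have : \sum_i (c i + cm i) * A i j <= 0.
    apply: sumr_le0 => i _; have [->|ij] := eqVneq i j.
      by rewrite /cm cj_lt0 addrN mul0r.
    by apply: mulr_ge0_le0; [rewrite /cm; case: ltrP; lra | exact: A_le0].
  by under eq_bigr do rewrite mulrDl; rewrite big_split /=; have := y_ge0 j; lra.
(* x is the negative part of c divided by d: the off-diagonal entries of A being
   nonpositive, the quadratic form at x is nonpositive, hence x = 0. *)
pose x i : rat := (cm i)%:~R / d i.
have xd i : x i * d i = (cm i)%:~R by rewrite /x divfK // gt_eqF.
have Q_le0 : \sum_i \sum_j x i * d i * (A i j)%:~R * x j <= 0.
  rewrite exchange_big /=; apply: sumr_le0 => j _.
  have -> : \sum_i x i * d i * (A i j)%:~R * x j = x j * (\sum_i cm i * A i j)%:~R.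
    by rewrite rmorph_sum mulr_sumr; apply: eq_bigr => i _; rewrite xd rmorphM /=; ring.
  have [cm0|/cm_A] := eqVneq (cm j) 0; first by rewrite /x cm0 !mul0r.
  by rewrite -(lerz0 rat) => ?; rewrite mulr_ge0_le0 // divr_ge0 ?ler0z // ltW.
move=> i; rewrite leNgt; apply/negP => ci_lt0.
have xi : x i != 0.
  by rewrite /x /cm ci_lt0 mulf_neq0 ?invr_eq0 ?gt_eqF // ltr0z oppr_gt0.
by have := dA_pos x (ex_intro _ i xi); rewrite ltNge Q_le0.
Qed.

Lemma cartan_preimage_eq0 (c : 'I_n -> int) k : indecomposable A ->
  (forall j, 0 <= \sum_i c i * A i j) -> c k = 0 -> forall i, c i = 0.
Proof.
move=> A_indec y_ge0 ck0; have c_ge0 := cartan_preimage_ge0 y_ge0.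
pose Z := [set i | c i == 0].
have [ZT i|ZnT] := eqVneq Z setT.
  have : i \in Z by rewrite ZT inE.
  by rewrite inE => /eqP.
have Z_n0 : Z != set0 by apply/set0Pn; exists k; rewrite inE ck0.
have [a [b [aZ bZ ab_n0]]] := A_indec Z Z_n0 ZnT.
case: HA => _ A_le0 A_eq0 _.
have ba_lt0 : A b a < 0.
  rewrite lt_def eq_sym A_le0 ?andbT; last by apply: contraNneq bZ => ->.
  by apply: contra_neq ab_n0 => /A_eq0.
have : \sum_i c i * A i a < 0.
  rewrite (bigD1 b) //= -[0]addr0 ltr_leD //.
    by rewrite pmulr_rlt0 // lt_def c_ge0 andbT; rewrite inE in bZ.
  apply: sumr_le0 => i _; have [->|ia] := eqVneq i a.
    by move: aZ; rewrite inE => /eqP ->; rewrite mul0r.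
  by rewrite mulr_ge0_le0 ?c_ge0 ?A_le0.
by rewrite ltNge y_ge0.
Qed.

Lemma word_row_notin r i m (M : 'M[int]_(n, m)) :
  i \notin r -> forall j, (word A r *m M) i j = M i j.
Proof.
elim: r => [|x r IH] /=; first by rewrite mul1mx.
rewrite in_cons negb_or => /andP [ix ir] j.
by rewrite -mulmxA refl_mulmxE (negbTE ix) mul0r subr0 IH.
Qed.

Lemma word_row_parabolic (J : {set 'I_n}) i y : all (mem J) y ->
  exists2 c : 'I_n -> int, (forall k, k \notin J -> c k = 0) &
    forall j, word A y i j = (i == j)%:R - \sum_l c l * A l j.
Proof.
elim/last_ind: y => [|y x IH].
  by exists (fun=> 0) => // j; rewrite big1 ?subr0 ?mxE // => l _; rewrite mul0r.
rewrite all_rcons => /andP [xJ /IH [c cJ Ec]].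
exists (fun l => c l + (x == l)%:R * word A y i x).
  move=> k kJ; rewrite cJ // add0r; case: eqP => [xk|_]; last by rewrite mul0r.
  by rewrite -xk in kJ; case/negP: kJ.
move=> j; rewrite word_rcons mulmx_reflE !Ec.
under [X in _ = _ - X]eq_bigr do rewrite mulrDl -mulrA.
by rewrite big_split /= big_delta_l; ring.
Qed.

Lemma parabolic_row_pos (J : {set 'I_n}) y i : indecomposable A -> J != setT ->
  all (mem J) y -> exists j, 0 < word A y i j.
Proof.
move=> A_indec JnT /(word_row_parabolic i) [c cJ Ec].
apply/existsP; apply: contraT => /existsPn row_le0.
have y_ge0 j : (i == j)%:R <= \sum_l c l * A l j.
  by rewrite -subr_le0 -Ec leNgt row_le0.
move: JnT; rewrite -properT => /properP [_ [k _ kJ]].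
have c0 := cartan_preimage_eq0 A_indec (fun j => le_trans (ler0n _ _) (y_ge0 j)) (cJ k kJ).
by have := y_ge0 i; rewrite eqxx big1 // => l _; rewrite c0 mul0r.
Qed.

Lemma bruhat_le_trans u v w : bruhat_le A u v -> bruhat_le A v w -> bruhat_le A u w.
Proof.
move=> le_uv le_vw; elim: le_vw le_uv => // v1 v2 v3 _ IH step le_uv1.
exact: bruhat_trans (IH le_uv1) step.
Qed.

Lemma bruhat_le_reduced_step s s' t : reduced A s -> reduced A s' ->
  (size s < size s')%N -> reflection A t -> word A s' = word A s *m t ->
  bruhat_le A (word A s) (word A s').
Proof.
move=> red_s red_s' lt_ss' t_refl Es'; apply: bruhat_trans (bruhat_refl _ _) _.
by exists t; split=> //; exists (size s), (size s'); split=> //; [exists s | exists s'].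
Qed.

Lemma bruhat_le_prefix p q : reduced A (p ++ q) -> bruhat_le A (word A p) (word A (p ++ q)).
Proof.
elim/last_ind: q => [|q x IH] red; first by rewrite cats0; apply: bruhat_refl.
have red' : reduced A (p ++ q).
  by apply: (reduced_infix (a := [::]) (c := [:: x])); rewrite /= -catA cats1.
apply: bruhat_le_trans (IH red') _; rewrite -rcons_cat in red *.
apply: bruhat_le_reduced_step (refl A x) _ red _ _ _ => //.
- by rewrite size_rcons.
- by exists [::], x; rewrite /= mulmx1.
- by rewrite word_rcons.
Qed.

Lemma bruhat_le_suffix p q : reduced A (p ++ q) -> bruhat_le A (word A q) (word A (p ++ q)).
Proof.
elim: p => [|x p IH] /= red; first exact: bruhat_refl.
have red' : reduced A (p ++ q).
  by apply: (reduced_infix (a := [:: x]) (c := [::])); rewrite cats0.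
apply: bruhat_le_trans (IH red') _.
apply: bruhat_le_reduced_step (word A (rev (p ++ q) ++ x :: p ++ q)) _ red _ _ _ => //.
- by exists (rev (p ++ q)), x; rewrite revK.
- by rewrite (word_cat (rev (p ++ q))) mulmxA mulmx_word_rev mul1mx.
Qed.

Lemma refl_bruhat_le_word r i : reduced A r -> i \in r -> bruhat_le A (refl A i) (word A r).
Proof.
move=> red ir; case/splitPr: ir red => p q red; rewrite -word_seq1.
apply: bruhat_le_trans (bruhat_le_suffix red).
apply: (bruhat_le_prefix (p := [:: i])).
by apply: (reduced_infix (a := p) (c := [::])); rewrite cats0.
Qed.

End WeylGroup.

Theorem lemma3p7 (n : nat) (A : 'M[int]_n) (J : {set 'I_n})
  (w0 wP : 'M[int]_n) :
  (0 < n)%N -> finite_type_cartan A -> indecomposable A ->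
  J != setT ->
  longest_in A setT w0 -> longest_in A J wP ->
  forall i : 'I_n, Gamma A (w0 *m wP) i.
Proof.
move=> _ HA A_indec JnT [s0 [Ew0 _ red_s0 max_s0]] [sP [EwP sPJ _ _]] i.
have Adiag : forall i, A i i = 2 by case: HA.
have [r [Er _ red_r]] := ell_witness A (s0 ++ sP).
rewrite /Gamma -Ew0 -EwP -word_cat -Er.
have [ir|ir] := boolP (i \in r); first exact: refl_bruhat_le_word.
have Ew0' : word A s0 = word A r *m word A (rev sP).
  by rewrite Er word_cat -mulmxA mulmx_word_rev // mulmx1.
have w0_le0 : forall k j, word A s0 k j <= 0.
  apply: longest_col_le0 => // s red_s; apply: max_s0 red_s.
  by apply/allP => x; rewrite inE.
have [|j] := parabolic_row_pos HA i A_indec JnT (y := rev sP); first by rewrite all_rev.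
by rewrite -(word_row_notin A _ ir) -Ew0' ltNge w0_le0.
Qed.
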